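(* Let $N>0$, $m>0$, $w\geq 0$, $\alpha>0$ and let $y,t,L,L_g,g$ be real numbers with $L+L_g>0$. Let $p:[0,N]\to(0,\infty)$ be an integrable function that attains its maximum and its minimum on $[0,N]$, and suppose that for every $i\in[0,N]$ \[ \int_0^N \ln\left[\frac{p(i)}{p(j)}\right]p(j)\,dj + \frac{p(i)-mw}{p(i)}\int_0^N p(j)\,dj = \alpha(y-t) + \frac{\alpha g}{L+L_g}\int_0^N p(j)\,dj . \] Then $p$ is constant on $[0,N]$, i.e. there is $p_0$ with $p(i)=p_0$ for all $i\in[0,N]$.
   Context: This is the first-order condition for profit maximization of firm $i$ in a monopolistic-competition model with a continuum $[0,N]$ of firms, each producing one variety $i$ with labor input $l=F+mq$, nominal wage $w$, consumers with CARA partial utility $u(q)=k-\kappa e^{-\alpha q}$, income $y$, tax $t$, $L$ privately employed and $L_g$ governmentally employed workers, and a government purchase $g(i)=g$ of every variety $i$ (the same for all varieties). *)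

From HB Require Import structures.
From mathcomp Require Import all_boot all_order all_algebra.
From mathcomp Require Import all_classical all_reals all_analysis.
Set Implicit Arguments. Unset Strict Implicit. Unset Printing Implicit Defensive.

From HB Require Import structures.
From mathcomp Require Import all_boot all_order all_algebra.
From mathcomp Require Import all_classical all_reals all_analysis.
From mathcomp Require Import measurable_realfun lra.
Import Order.TTheory GRing.Theory Num.Theory.
Local Open Scope classical_set_scope.
Local Open Scope ring_scope.

(* Since p lies between its positive minimum and its maximum, ln p * p is
   integrable and the first integral splits as ln (p i) * P - Q, where
   P = int p > 0 and Q = int (ln p * p) do not depend on i.  The first-order
   condition then says that (ln x + (x - m w) / x) * P takes the same value at
   every x = p i; as x |-> ln x + (x - m w) / x is strictly increasing on
   (0, +oo), all the p i coincide. *)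

Section LnFacts.
Context {R : realType}.

Lemma norm_ln_le {a b x : R} : 0 < a -> a <= x <= b ->
  `|ln x| <= `|ln a| + `|ln b|.
Proof.
move=> a_gt0 /andP[ax xb]; have x_gt0 := lt_le_trans a_gt0 ax.
have lnax : ln a <= ln x by rewrite ler_ln ?posrE.
have lnxb : ln x <= ln b by rewrite ler_ln ?posrE ?(lt_le_trans x_gt0).
have := ler_norm (ln b); have : - ln a <= `|ln a| by rewrite -normrN ler_norm.
have := normr_ge0 (ln a); have := normr_ge0 (ln b).
case: (lerP 0 (ln x)) => [/ger0_norm|/ltr0_norm] ->; lra.
Qed.

(* (x - c) / x is the Lerner index (relative markup) of a price x over the
   marginal cost c. *)
Lemma ln_add_lerner_homo {c : R} : 0 <= c ->
  {in Num.pos &, {homo (fun x => ln x + (x - c) / x) : x y / x < y}}.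
Proof.
move=> c_ge0 x y x_gt0 y_gt0 xy /=.
have lnxy : ln x < ln y by rewrite ltr_ln.
have cxy : c / y <= c / x.
  by apply: ler_wpM2l => //; rewrite lef_pV2 // ltW.
rewrite !mulrBl !divff ?gt_eqF //; lra.
Qed.

Lemma ln_add_lerner_inj {c : R} : 0 <= c ->
  {in Num.pos &, injective (fun x => ln x + (x - c) / x)}.
Proof. by move=> c_ge0; apply/inc_inj_in/le_mono_in/ln_add_lerner_homo. Qed.

End LnFacts.

Section RintegralLn.
Context {R : realType} {d} {T : measurableType d} {mu : {measure set T -> \bar R}}.
Context {D : set T} {f : T -> R} {a b : R}.
Hypotheses (mD : measurable D) (a_gt0 : 0 < a).
Hypothesis f_bound : forall x, D x -> a <= f x <= b.
Hypothesis f_int : mu.-integrable D (EFin \o f).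

Let f_gt0 x : D x -> 0 < f x.
Proof. by move=> /f_bound /andP[+ _]; apply: lt_le_trans. Qed.

Let f_mes : measurable_fun D f.
Proof. exact/measurable_EFinP/(measurable_int mu). Qed.

Lemma integrable_ln_mul : mu.-integrable D (EFin \o (fun x => ln (f x) * f x)).
Proof.
apply: (le_integrable mD _ _ (integrableZl mD (`|ln a| + `|ln b|) f_int)).
  apply/measurable_EFinP/measurable_funM => //.
  exact: measurableT_comp (@measurable_ln R) f_mes.
move=> x Dx /=; rewrite lee_fin !normrM [`|_ + _|]ger0_norm ?addr_ge0 //.
by rewrite ler_wpM2r // (norm_ln_le a_gt0 (f_bound x Dx)).
Qed.

Lemma Rintegral_ln_div_mul (c : R) : 0 < c ->
  \int[mu]_(x in D) (ln (c / f x) * f x) =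
  ln c * \int[mu]_(x in D) f x - \int[mu]_(x in D) (ln (f x) * f x).
Proof.
move=> c_gt0; rewrite -RintegralZl // -RintegralB //; last 2 first.
- exact: (integrableZl mD (ln c) f_int).
- exact: integrable_ln_mul.
apply: eq_Rintegral => x; rewrite inE => Dx.
by rewrite ln_div ?posrE ?f_gt0 //; lra.
Qed.

Lemma Rintegral_gt0 : (0 < mu D < +oo)%E -> 0 < \int[mu]_(x in D) f x.
Proof.
move=> /andP[muD_gt0 muD_fin].
have cst_int : mu.-integrable D (EFin \o cst a).
  apply: measurable_bounded_integrable => //.
  by exists `|a|; split; rewrite ?num_real // => r ar x _ /=; apply/ltW.
apply: (lt_le_trans _ (le_Rintegral mD cst_int f_int _)).
  by rewrite Rintegral_cst // mulr_gt0 // fine_gt0 // muD_gt0 muD_fin.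
by move=> x /f_bound /andP[].
Qed.

End RintegralLn.

Theorem proposition1 (R : realType) (N m w alpha y t L Lg g : R)
  (p : R -> R)
  (hN : 0 < N) (hm : 0 < m) (hw : 0 <= w) (halpha : 0 < alpha)
  (hL : 0 < L + Lg)
  (hpos : forall i, i \in `[0, N] -> 0 < p i)
  (hint : (@lebesgue_measure R).-integrable `[0, N] (EFin \o p))
  (hmax : exists2 imax, imax \in `[0, N] &
            forall j, j \in `[0, N] -> p j <= p imax)
  (hmin : exists2 imin, imin \in `[0, N] &
            forall j, j \in `[0, N] -> p imin <= p j)
  (hfoc : forall i, i \in `[0, N] ->
     Rintegral (@lebesgue_measure R) `[0, N] (fun j => ln (p i / p j) * p j)
     + (p i - m * w) / p i * Rintegral (@lebesgue_measure R) `[0, N] p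
     = alpha * (y - t)
       + alpha * g / (L + Lg) * Rintegral (@lebesgue_measure R) `[0, N] p) :
  exists p0 : R, forall i, i \in `[0, N] -> p i = p0.
Proof.
case: hmax => imax _ hmax; case: hmin => imin iminD hmin.
have mD : measurable (`[0, N] : set (measurableTypeR R)) := measurable_itv _.
have p_bound x : x \in `[0, N] -> p imin <= p x <= p imax by move=> Dx; rewrite hmin ?hmax.
set P := Rintegral (@lebesgue_measure R) `[0, N] p.
set Q := Rintegral (@lebesgue_measure R) `[0, N] (fun j => ln (p j) * p j).
have P_gt0 : 0 < P.
  apply: (Rintegral_gt0 mD (hpos _ iminD) p_bound hint).
  change (0 < (@lebesgue_measure R) [set` `[0, N]%R] < +oo)%E.
  by rewrite lebesgue_measure_itv /= lte_fin hN -EFinD subr0 lte_fin hN ltry.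
have foc_ln i : i \in `[0, N] -> (ln (p i) + (p i - m * w) / p i) * P =
    alpha * (y - t) + alpha * g / (L + Lg) * P + Q.
  move=> iD; rewrite -(hfoc i iD).
  by rewrite (Rintegral_ln_div_mul mD (hpos _ iminD) p_bound hint) ?hpos // -/P -/Q; lra.
have zeroD : 0 \in `[0, N] by rewrite in_itv /= lexx ltW.
exists (p 0) => i iD.
apply: (ln_add_lerner_inj (mulr_ge0 (ltW hm) hw)); rewrite ?posrE ?hpos //=.
by apply: (mulIf (lt0r_neq0 P_gt0)); rewrite !foc_ln.
Qed.
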